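(* Let $S$ be an AG-groupoid with a left identity. If $B_{1}$ and $B_{2}$ are bi-ideals of $S$, then the product $B_{1}B_{2}$ is a bi-ideal of $S$.
   Context: An AG-groupoid is a set $S$ with a binary operation satisfying $(ab)c=(cb)a$ for all $a,b,c\in S$. A left identity is an element $e$ with $ea=a$ for all $a\in S$. For nonempty subsets, $AB=\{ab:a\in A,b\in B\}$. A bi-ideal of $S$ is a nonempty subset $B$ with $BB\subseteq B$ and $(BS)B\subseteq B$. *)

Definition AG_groupoid {S : Type} (mul : S -> S -> S) : Prop :=
  forall a b c : S, mul (mul a b) c = mul (mul c b) a.

Definition left_identity {S : Type} (mul : S -> S -> S) (e : S) : Prop :=
  forall a : S, mul e a = a.

Definition setmul {S : Type} (mul : S -> S -> S) (A B : S -> Prop) : S -> Prop :=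
  fun x => exists a b, A a /\ B b /\ x = mul a b.

Definition setT {S : Type} : S -> Prop := fun _ => True.

Definition subset {S : Type} (A B : S -> Prop) : Prop := forall x, A x -> B x.

Definition bi_ideal {S : Type} (mul : S -> S -> S) (B : S -> Prop) : Prop :=
  (exists x, B x) /\
  subset (setmul mul B B) B /\
  subset (setmul mul (setmul mul B setT) B) B.


(* Every AG-groupoid is medial: (ab)(cd) = (ac)(bd).  With a left
   identity e one can moreover split an arbitrary right factor s as e s, so
   (ab)s = (ab)(es) = (ae)(bs).  Now take elements a1 b1, a2 b2 of B1B2
   (a_i in B1, b_i in B2).
   - Closure under products: (a1b1)(a2b2) = (a1a2)(b1b2) by mediality, and
     a1a2 in B1, b1b2 in B2.
   - Closure under (BS)B: for s in S,
       ((a1b1)s)(a2b2) = ((a1e)(b1s))(a2b2) = ((a1e)a2)((b1s)b2),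
     and (a1e)a2 in (B1S)B1 ⊆ B1, (b1s)b2 in (B2S)B2 ⊆ B2. *)

Section AGGroupoid.

Variable S : Type.
Variable mul : S -> S -> S.
Hypothesis hAG : AG_groupoid mul.

Lemma medial (a b c d : S) :
  mul (mul a b) (mul c d) = mul (mul a c) (mul b d).
Proof.
  rewrite (hAG a b (mul c d)), (hAG c d b).
  apply hAG.
Qed.

Lemma distribute_right_factor (e : S) (he : left_identity mul e) (a b s : S) :
  mul (mul a b) s = mul (mul a e) (mul b s).
Proof.
  replace (mul (mul a b) s) with (mul (mul a b) (mul e s)) by now rewrite he.
  apply medial.
Qed.

Variables B1 B2 : S -> Prop.

Lemma setmul_closed_mul :
  subset (setmul mul B1 B1) B1 -> subset (setmul mul B2 B2) B2 ->
  subset (setmul mul (setmul mul B1 B2) (setmul mul B1 B2)) (setmul mul B1 B2).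
Proof.
  intros M1 M2 x [p [q [[a1 [b1 [Ha1 [Hb1 ->]]]] [[a2 [b2 [Ha2 [Hb2 ->]]]] ->]]]].
  exists (mul a1 a2), (mul b1 b2); split; [|split].
  - apply M1; exists a1, a2; auto.
  - apply M2; exists b1, b2; auto.
  - apply medial.
Qed.

Lemma setmul_closed_sandwich (e : S) (he : left_identity mul e) :
  subset (setmul mul (setmul mul B1 setT) B1) B1 ->
  subset (setmul mul (setmul mul B2 setT) B2) B2 ->
  subset (setmul mul (setmul mul (setmul mul B1 B2) setT) (setmul mul B1 B2))
         (setmul mul B1 B2).
Proof.
  intros I1 I2 x
    [p [q [[u [s [[a1 [b1 [Ha1 [Hb1 ->]]]] [_ ->]]]] [[a2 [b2 [Ha2 [Hb2 ->]]]] ->]]]].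
  exists (mul (mul a1 e) a2), (mul (mul b1 s) b2); split; [|split].
  - apply I1; exists (mul a1 e), a2; split; [exists a1, e|]; unfold setT; auto.
  - apply I2; exists (mul b1 s), b2; split; [exists b1, s|]; unfold setT; auto.
  - rewrite (distribute_right_factor e he a1 b1 s).
    apply medial.
Qed.

End AGGroupoid.

Theorem proposition2 (S : Type) (mul : S -> S -> S) (e : S)
  (hAG : AG_groupoid mul) (he : left_identity mul e)
  (B1 B2 : S -> Prop) (h1 : bi_ideal mul B1) (h2 : bi_ideal mul B2) :
  bi_ideal mul (setmul mul B1 B2).
Proof.
  destruct h1 as [[x1 Hx1] [M1 I1]], h2 as [[x2 Hx2] [M2 I2]].
  split; [|split].
  - exists (mul x1 x2), x1, x2; auto.
  - exact (setmul_closed_mul S mul hAG B1 B2 M1 M2).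
  - exact (setmul_closed_sandwich S mul hAG B1 B2 e he I1 I2).
Qed.
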